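(* Let $\mathfrak{g}$ be a nilpotent Lie algebra over $\mathbb{R}$ of dimension $2p+1$ admitting a contact form, i.e. a linear form $\omega\in\mathfrak{g}^*$ with $\omega\wedge(d\omega)^p\neq 0$, where $d\omega(X,Y)=-\omega([X,Y])$. Then the quotient Lie algebra $\mathfrak{g}/Z(\mathfrak{g})$ (where $Z(\mathfrak{g})$ is the center of $\mathfrak{g}$) is a symplectic Lie algebra.
   Context: A symplectic Lie algebra is a Lie algebra $\mathfrak{h}$ equipped with a nondegenerate skew-symmetric bilinear form $\theta$ which is a $2$-cocycle, i.e. $\theta([X,Y],Z)+\theta([Y,Z],X)+\theta([Z,X],Y)=0$ for all $X,Y,Z\in\mathfrak{h}$. *)

From HB Require Import structures.
From mathcomp Require Import all_boot all_order all_algebra.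
From mathcomp Require Import fingroup perm.
From mathcomp Require Import reals.
Set Implicit Arguments. Unset Strict Implicit. Unset Printing Implicit Defensive.
Import Order.TTheory GRing.Theory Num.Theory.
Local Open Scope ring_scope.

Section LieDefs.
Variables (R : realType) (V : vectType R).

Definition bilinear_map (W : lmodType R) (b : V -> V -> W) : Prop :=
  (forall a x y z, b (a *: x + y) z = a *: b x z + b y z) /\
  (forall a x y z, b x (a *: y + z) = a *: b x y + b x z).

Definition lie_bracket (br : V -> V -> V) : Prop :=
  bilinear_map br /\ (forall x, br x x = 0) /\
  (forall x y z, br x (br y z) + br y (br z x) + br z (br x y) = 0).

(* nilpotent: all left-normed brackets [x1,[x2,...,[xn,y]]] of some fixed
   length vanish, i.e. some term C^n g of the lower central series is 0 *)
Definition lie_nilpotent (br : V -> V -> V) : Prop :=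
  exists n : nat, forall (xs : seq V) (y : V),
    size xs = n -> foldr (fun x acc => br x acc) y xs = 0.

Definition lie_center (br : V -> V -> V) (z : V) : Prop :=
  forall x, br z x = 0.

Definition lin_form (w : V -> R) : Prop :=
  forall a x y, w (a *: x + y) = a * w x + w y.

Definition dform (br : V -> V -> V) (w : V -> R) (x y : V) : R := - w (br x y).

(* (w /\ (dw)^p)(v_0, ..., v_2p), up to a nonzero normalising constant:
   the full antisymmetrisation of w(v0) dw(v1,v2) ... dw(v_{2p-1},v_{2p}). *)
Definition contact_top (br : V -> V -> V) (w : V -> R) (p : nat)
    (v : 'I_(2 * p).+1 -> V) : R :=
  \sum_(s : 'S_(2 * p).+1)
    (-1) ^+ (odd_perm s) * w (v (s ord0)) *
    \prod_(i < p) dform br w (v (s (inord (2 * i + 1)))) (v (s (inord (2 * i + 2)))).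

Definition contact_form (br : V -> V -> V) (p : nat) (w : V -> R) : Prop :=
  lin_form w /\ exists v : 'I_(2 * p).+1 -> V, @contact_top br w p v != 0.

End LieDefs.

Section SympDefs.
Variables (R : realType) (Q : vectType R).

Definition symplectic_form (brQ : Q -> Q -> Q) (th : Q -> Q -> R) : Prop :=
  bilinear_map (W := R^o) th /\
  (forall x y, th x y = - th y x) /\
  (forall x, (forall y, th x y = 0) -> x = 0) /\
  (forall x y z, th (brQ x y) z + th (brQ y z) x + th (brQ z x) y = 0).

End SympDefs.

From HB Require Import structures.
From mathcomp Require Import all_boot all_order all_algebra.
From mathcomp Require Import fingroup perm.
From mathcomp Require Import reals.
From mathcomp Require Import lra zify.
From Stdlib Require Import Classical FunctionalExtensionality.
Import GRing.Theory Num.Theory.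
Local Open Scope ring_scope.
Set Implicit Arguments. Unset Strict Implicit.

(* The 2-form dw descends to g/Z(g), since central vectors lie in its
   radical; it is skew-symmetric, and closed by the Jacobi identity.  It is
   nondegenerate because the radical of dw is exactly Z(g): a non-central x
   in the radical, together with a nonzero central z (which exists since g is
   nilpotent), would span a plane in the radical; expanding w /\ (dw)^p on a
   basis starting with x, z, every term either repeats a basis vector or
   feeds x or z to some dw, so the top form would vanish identically. *)

Section Bilinear.
Variables (R : realType) (V : vectType R) (W : lmodType R) (b : V -> V -> W).
Hypothesis Hb : bilinear_map b.

Lemma bilinDl x y z : b (x + y) z = b x z + b y z.
Proof. by have := Hb.1 1 x y z; rewrite !scale1r. Qed.

Lemma bilinDr x y z : b x (y + z) = b x y + b x z.
Proof. by have := Hb.2 1 x y z; rewrite !scale1r. Qed.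

Lemma bilin0l z : b 0 z = 0.
Proof. by have := Hb.1 (-1) 0 0 z; rewrite !scaleN1r !addNr. Qed.

Lemma bilin0r x : b x 0 = 0.
Proof. by have := Hb.2 (-1) x 0 0; rewrite !scaleN1r !addNr. Qed.

Lemma bilinZl a x z : b (a *: x) z = a *: b x z.
Proof. by rewrite -[a *: x]addr0 Hb.1 bilin0l addr0. Qed.

Lemma bilinZr a x y : b x (a *: y) = a *: b x y.
Proof. by rewrite -[a *: y]addr0 Hb.2 bilin0r addr0. Qed.

End Bilinear.

Section LinearForm.
Variables (R : realType) (V : vectType R) (w : V -> R).
Hypothesis Hw : lin_form w.

Lemma linformD x y : w (x + y) = w x + w y.
Proof. by have := Hw 1 x y; rewrite scale1r mul1r. Qed.

Lemma linform0 : w 0 = 0.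
Proof. by have := Hw (-1) 0 0; rewrite scaleN1r mulN1r !addNr. Qed.

Lemma linformZ a x : w (a *: x) = a * w x.
Proof. by rewrite -[a *: x]addr0 Hw linform0 addr0. Qed.

Lemma linformN x : w (- x) = - w x.
Proof. by rewrite -scaleN1r linformZ mulN1r. Qed.

Lemma linform_sum (I : finType) (c : I -> R) (X : I -> V) :
  w (\sum_i c i *: X i) = \sum_i c i * w (X i).
Proof.
by elim/big_rec2: _ => [|i y1 y2 _ <-]; rewrite ?linform0 // linformD linformZ.
Qed.

End LinearForm.

Section LieAlgebra.
Variables (R : realType) (V : vectType R) (br : V -> V -> V) (w : V -> R).
Hypothesis Hlie : lie_bracket br.
Hypothesis Hw : lin_form w.

Let Hbr : bilinear_map br := Hlie.1.

Lemma lie_brC x y : br y x = - br x y.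
Proof.
have alt := Hlie.2.1; apply/eqP; rewrite -addr_eq0 addrC.
by have := alt (x + y); rewrite (bilinDl Hbr) !(bilinDr Hbr) !alt add0r addr0 => ->.
Qed.

Definition dform_radical (x : V) := forall y, dform br w x y = 0.

Lemma center_dform_radical z : lie_center br z -> dform_radical z.
Proof. by move=> hz y; rewrite /dform hz (linform0 Hw) oppr0. Qed.

Lemma dform_bilinear : bilinear_map (W := R^o) (dform br w).
Proof.
by split=> a x y z; rewrite /dform (bilinDl Hbr, bilinDr Hbr) (bilinZl Hbr, bilinZr Hbr)
  (linformD Hw) (linformZ Hw) opprD -mulrN.
Qed.

Lemma dform_skew x y : dform br w x y = - dform br w y x.
Proof. by rewrite /dform lie_brC (linformN Hw) opprK. Qed.

Lemma dform_cocycle x y z :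
  dform br w (br x y) z + dform br w (br y z) x + dform br w (br z x) y = 0.
Proof.
have := congr1 w (Hlie.2.2 x y z); rewrite !(linformD Hw) (linform0 Hw) => jacobi.
rewrite /dform (lie_brC z (br x y)) (lie_brC x (br y z)) (lie_brC y (br z x)).
rewrite !(linformN Hw) !opprK; lra.
Qed.

Lemma dform_centerD c d x y : lie_center br c -> lie_center br d ->
  dform br w (c + x) (d + y) = dform br w x y.
Proof.
move=> hc hd; rewrite /dform (bilinDl Hbr) hc add0r (bilinDr Hbr).
by rewrite (lie_brC d) hd oppr0 add0r.
Qed.

Lemma lie_nilpotent_center : lie_nilpotent br -> (0 < \dim {:V})%N ->
  exists2 z, z != 0 & lie_center br z.
Proof.
pose bracket_chain xs y := foldr (fun x acc => br x acc) y xs.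
have center_or_trivial N : (forall xs y, size xs = N -> bracket_chain xs y = 0) ->
    (forall y : V, y = 0) \/ exists2 z, z != 0 & lie_center br z.
  elim: N => [|N IH] chainN0; first by left=> y; exact: (chainN0 [::] y).
  case: (classic (exists xs y, size xs = N /\ bracket_chain xs y != 0)).
    move=> [xs [y [sxs nz]]]; right; exists (bracket_chain xs y) => // t.
    by rewrite lie_brC -[br t _]/(bracket_chain (t :: xs) y) chainN0 ?oppr0 //= sxs.
  move=> none; apply: IH => xs y sxs; apply/eqP/negPn/negP => nz.
  by apply: none; exists xs, y.
move=> [N chainN0] dimV; case: (center_or_trivial N chainN0) => // triv.
suff: {:V}%VS = 0%VS by move=> V0; move: dimV; rewrite V0 dimv0.
by apply/vspaceP => v; rewrite memvf memv0 (triv v) eqxx.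
Qed.

End LieAlgebra.

Section Multilinear.
Variables (R : realType) (V : vectType R) (n : nat).

Definition upd (u : 'I_n -> V) (k : 'I_n) (y : V) : 'I_n -> V :=
  fun j => if j == k then y else u j.

Lemma upd_id u k : upd u k (u k) = u.
Proof. by apply: functional_extensionality => j; rewrite /upd; case: eqP => // ->. Qed.

Lemma upd_perm u (s : 'S_n) k y :
  (fun j => upd u k y (s j)) = upd (fun j => u (s j)) (s^-1%g k) y.
Proof.
apply: functional_extensionality => j.
by rewrite /upd -[j == _](inj_eq (@perm_inj _ s)) permKV.
Qed.

Definition multilinear (F : ('I_n -> V) -> R) :=
  forall u k, lin_form (fun y => F (upd u k y)).

Lemma multilinear_eq0 (F : ('I_n -> V) -> R) m (X : 'I_m -> V) :
  multilinear F -> (forall y, exists c : 'I_m -> R, y = \sum_k c k *: X k) ->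
  (forall f : 'I_n -> 'I_m, F (X \o f) = 0) -> forall u, F u = 0.
Proof.
move=> HF Xspan FX0.
suff FN0 N u : (forall j : 'I_n, (N <= j)%N -> exists k, u j = X k) -> F u = 0.
  by move=> u; apply: (FN0 n) => j; have := ltn_ord j; lia.
elim: N u => [|N IH] u uX.
  have [f uf] : exists f : 'I_n -> 'I_m, forall j, u j = X (f j).
    by apply: (@fin_all_exists _ (fun=> 'I_m) (fun j k => u j = X k)) => j; apply: uX.
  by rewrite -(FX0 f); congr F; apply: functional_extensionality.
case: (ltnP N n) => [ltNn|]; last by move=> leNn; apply: IH => j; have := ltn_ord j; lia.
pose jN : 'I_n := Ordinal ltNn.
rewrite -(upd_id u jN); have [c ->] := Xspan (u jN).
rewrite (linform_sum (HF u jN)) big1 // => k _.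
rewrite IH ?mulr0 // => j leNj; rewrite /upd; case: eqP => [_|ne]; first by exists k.
apply: uX; rewrite ltn_neqAle leNj andbT.
by apply/eqP => eNj; apply: ne; apply: val_inj; rewrite /= eNj.
Qed.

End Multilinear.

Section ContactForm.
Variables (R : realType) (V : vectType R) (br : V -> V -> V) (w : V -> R) (p : nat).

Local Notation n := (2 * p).+1.

Definition slot1 (i : 'I_p) : 'I_n := inord (2 * i + 1).
Definition slot2 (i : 'I_p) : 'I_n := inord (2 * i + 2).

Lemma slot1E i : slot1 i = (2 * i + 1)%N :> nat.
Proof. by rewrite inordK //; have := ltn_ord i; lia. Qed.

Lemma slot2E i : slot2 i = (2 * i + 2)%N :> nat.
Proof. by rewrite inordK //; have := ltn_ord i; lia. Qed.

Lemma slot_cover k : k != ord0 -> exists i, k = slot1 i \/ k = slot2 i.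
Proof.
rewrite -val_eqE /= => k0; have kn := ltn_ord k.
have ltip : ((k - 1) %/ 2 < p)%N by lia.
exists (Ordinal ltip).
have [odd_k|even_k] : ((k : nat) = 2 * ((k - 1) %/ 2) + 1 \/
                       (k : nat) = 2 * ((k - 1) %/ 2) + 2)%N by lia.
  by left; apply: ord_inj; rewrite slot1E.
by right; apply: ord_inj; rewrite slot2E.
Qed.

Definition contact_term (u : 'I_n -> V) : R :=
  w (u ord0) * \prod_(i < p) dform br w (u (slot1 i)) (u (slot2 i)).

Lemma contact_topE (v : 'I_n -> V) : contact_top br w v =
  \sum_(s : 'S_n) (-1) ^+ odd_perm s * contact_term (fun k => v (s k)).
Proof. by apply: eq_bigr => s _; rewrite mulrA. Qed.

Lemma contact_top_alternate (u : 'I_n -> V) a b :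
  a != b -> u a = u b -> contact_top br w u = 0.
Proof.
move=> neab uab; suff: contact_top br w u = - contact_top br w u by lra.
(* Precomposing with the transposition (a b) fixes u and flips every sign. *)
rewrite !contact_topE [in LHS](reindex_inj (@mulIg _ (tperm a b))) -sumrN.
apply: eq_bigr => s _.
have -> : (fun k => u ((s * tperm a b)%g k)) = (fun k => u (s k)).
  apply: functional_extensionality => k; rewrite permM.
  by case: tpermP => [->|->|] //; rewrite uab.
by rewrite odd_permM odd_tperm neab signr_addb expr1 mulrN1 mulNr.
Qed.

Hypothesis Hlie : lie_bracket br.
Hypothesis Hw : lin_form w.

Lemma contact_term_upd0 (u : 'I_n -> V) :
  exists c, forall y, contact_term (upd u ord0 y) = c * w y.
Proof.
exists (\prod_(i < p) dform br w (u (slot1 i)) (u (slot2 i))) => y.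
rewrite /contact_term /upd eqxx mulrC; congr (_ * _); apply: eq_bigr => i _.
by rewrite -!val_eqE /= slot1E slot2E !addn1 !addn2.
Qed.

Lemma contact_term_upd_slot (u : 'I_n -> V) k : k != ord0 ->
  exists c t, forall y, contact_term (upd u k y) = c * dform br w y t.
Proof.
move=> k0; have [i0 k_slot] := slot_cover k0.
have other_slots i : i != i0 -> (slot1 i != k) && (slot2 i != k).
  by case: k_slot => ->; rewrite -!val_eqE /= !slot1E !slot2E; lia.
pose P := \prod_(i < p | i != i0) dform br w (u (slot1 i)) (u (slot2 i)).
have termE y : contact_term (upd u k y) =
    w (u ord0) * (dform br w (upd u k y (slot1 i0)) (upd u k y (slot2 i0)) * P).
  rewrite /contact_term (bigD1 i0) //=; congr (_ * (_ * _)).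
    by rewrite /upd eq_sym (negPf k0).
  apply: eq_bigr => i /other_slots /andP[ne1 ne2].
  by rewrite /upd (negPf ne1) (negPf ne2).
have slot21 : (slot2 i0 == slot1 i0) = false.
  by apply/eqP => /(congr1 (@nat_of_ord _)); rewrite slot1E slot2E; lia.
case: k_slot termE => -> termE.
  exists (w (u ord0) * P), (u (slot2 i0)) => y.
  by rewrite termE /upd eqxx slot21 [_ * P]mulrC mulrA.
exists (- (w (u ord0) * P)), (u (slot1 i0)) => y.
rewrite termE /upd eqxx eq_sym slot21 (dform_skew Hlie Hw).
by rewrite [_ * P]mulrC mulrA mulNr mulrN.
Qed.

Lemma contact_term_multilinear : multilinear contact_term.
Proof.
move=> u k a y1 y2; case: (eqVneq k ord0) => [->|k0].
  have [c termE] := contact_term_upd0 u.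
  by rewrite !termE (linformD Hw) (linformZ Hw) mulrDr mulrCA.
have [c [t termE]] := contact_term_upd_slot u k0.
by rewrite !termE (dform_bilinear Hlie Hw).1 mulrDr mulrCA.
Qed.

Lemma contact_top_multilinear : multilinear (@contact_top R V br w p).
Proof.
move=> v j a y1 y2; rewrite !contact_topE mulr_sumr -big_split.
apply: eq_bigr => s _ /=.
by rewrite !upd_perm contact_term_multilinear mulrDr mulrCA.
Qed.

Lemma contact_term_radical (u : 'I_n -> V) k : k != ord0 ->
  dform_radical br w (u k) -> contact_term u = 0.
Proof.
move=> k0 uk_rad; have [c [t termE]] := contact_term_upd_slot u k0.
by rewrite -(upd_id u k) termE uk_rad mulr0.
Qed.

Lemma contact_top_radical (u : 'I_n -> V) a b : a != b ->
  dform_radical br w (u a) -> dform_radical br w (u b) -> contact_top br w u = 0.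
Proof.
move=> neab ua_rad ub_rad; rewrite contact_topE big1 // => s _.
case: (eqVneq (s^-1%g a) ord0) => sa0.
  rewrite (@contact_term_radical _ (s^-1%g b)) ?mulr0 ?permKV //.
  by rewrite -sa0; apply: contra neab => /eqP /perm_inj ->.
by rewrite (@contact_term_radical _ (s^-1%g a)) ?mulr0 ?permKV.
Qed.

Hypothesis dimV : \dim {:V} = n.

Lemma contact_top_free_radical x z : free [:: x; z] ->
  dform_radical br w x -> dform_radical br w z ->
  forall v : 'I_n -> V, contact_top br w v = 0.
Proof.
move=> xz_free x_rad z_rad.
pose L := x :: z :: (vbasis (<<[:: x; z]>>^C)%VS : seq V).
have dim_xz : \dim <<[:: x; z]>> = 2%N by move: xz_free; rewrite /free => /eqP.
have sizeL : size L = n.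
  have : (2 <= \dim {:V})%N by rewrite -dim_xz dimvS ?subvf.
  by rewrite /= size_tuple dimv_compl dimV dim_xz; lia.
have spanL : <<L>>%VS = fullv.
  by rewrite (span_cat [:: x; z]) (span_basis (vbasisP _)) addv_complf.
pose X (k : 'I_(size L)) := L`_k.
apply: (multilinear_eq0 contact_top_multilinear (X := X)).
  move=> y; exists (fun k => coord (in_tuple L) k y).
  by rewrite {1}(coord_span (X := in_tuple L) (v := y)) // spanL memvf.
move=> f; case: (boolP (injectiveb f)) => [/injectiveP f_inj|]; last first.
  move=> /injectivePn [a [b neab fab]].
  by apply: (contact_top_alternate neab); rewrite /= fab.
have card_f : (#|'I_(size L)| <= #|'I_n|)%N by rewrite !card_ord sizeL.
have [a fa] := codomP (inj_card_onto f_inj card_f (@Ordinal (size L) 0 isT)).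
have [b fb] := codomP (inj_card_onto f_inj card_f (@Ordinal (size L) 1 isT)).
apply: (contact_top_radical (a := a) (b := b)); rewrite /= /X -?fa -?fb //.
by apply/eqP => eab; move: fb; rewrite -eab -fa => /(congr1 val).
Qed.

End ContactForm.

Section NilpotentContact.
Variables (R : realType) (V : vectType R) (br : V -> V -> V) (w : V -> R) (p : nat).
Hypothesis Hlie : lie_bracket br.
Hypothesis Hnil : lie_nilpotent br.
Hypothesis dimV : \dim {:V} = (2 * p).+1.
Hypothesis Hcontact : contact_form br p w.

Let Hw : lin_form w := Hcontact.1.

Lemma contact_radical_central x : dform_radical br w x -> lie_center br x.
Proof.
move=> x_rad; have [_ [v v_nz]] := Hcontact.
have [z z_nz z_center] : exists2 z, z != 0 & lie_center br z.
  by apply: (lie_nilpotent_center Hlie Hnil); rewrite dimV.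
case: (boolP (x \in <[z]>%VS)) => [/vlineP [c ->] y | x_notin_z].
  by rewrite (bilinZl Hlie.1) z_center scaler0.
have xz_free : free [:: x; z] by rewrite free_cons seq1_free z_nz andbT span_seq1.
have z_rad := center_dform_radical Hw z_center.
by rewrite (contact_top_free_radical Hlie Hw dimV xz_free x_rad z_rad) eqxx in v_nz.
Qed.

Variables (Q : vectType R) (brQ : Q -> Q -> Q) (pi : {linear V -> Q}).
Hypothesis pi_surj : forall q : Q, exists x : V, pi x = q.
Hypothesis pi_ker : forall x : V, pi x = 0 <-> lie_center br x.
Hypothesis pi_morph : forall x y : V, pi (br x y) = brQ (pi x) (pi y).

Definition quotient_lift (q : Q) : V := (linfun pi)^-1%VF q.

Lemma quotient_liftK q : pi (quotient_lift q) = q.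
Proof.
have [x <-] := pi_surj q; rewrite -lfunE limg_lfunVK //.
by rewrite -lfunE memv_img ?memvf.
Qed.

Definition quotient_dform (q1 q2 : Q) : R :=
  dform br w (quotient_lift q1) (quotient_lift q2).

Lemma quotient_dformE x y : quotient_dform (pi x) (pi y) = dform br w x y.
Proof.
have lift_center v : lie_center br (quotient_lift (pi v) - v).
  by apply/pi_ker; rewrite linearB quotient_liftK subrr.
rewrite /quotient_dform -[quotient_lift (pi x)](subrK x).
by rewrite -[quotient_lift (pi y)](subrK y) dform_centerD.
Qed.

Lemma quotient_dform_symplectic : symplectic_form brQ quotient_dform.
Proof.
split; [|split; [|split]].
- split=> a q1 q2 q3; have [x1 <-] := pi_surj q1; have [x2 <-] := pi_surj q2;
    have [x3 <-] := pi_surj q3; rewrite -linearP !quotient_dformE.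
  + exact: (dform_bilinear Hlie Hw).1.
  + exact: (dform_bilinear Hlie Hw).2.
- move=> q1 q2; have [x1 <-] := pi_surj q1; have [x2 <-] := pi_surj q2.
  by rewrite !quotient_dformE dform_skew.
- move=> q; have [x <-] := pi_surj q => x_rad.
  apply/pi_ker/contact_radical_central => y.
  by rewrite -quotient_dformE x_rad.
- move=> q1 q2 q3; have [x1 <-] := pi_surj q1; have [x2 <-] := pi_surj q2.
  have [x3 <-] := pi_surj q3.
  by rewrite -!pi_morph !quotient_dformE dform_cocycle.
Qed.

End NilpotentContact.

Theorem mainTheorem1 (R : realType) (V : vectType R) (br : V -> V -> V)
    (p : nat) (w : V -> R)
    (Hlie : lie_bracket br) (Hnil : lie_nilpotent br)
    (Hdim : \dim (fullv : {vspace V}) = (2 * p).+1)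
    (Hcontact : contact_form br p w)
    (Q : vectType R) (brQ : Q -> Q -> Q) (pi : {linear V -> Q})
    (Hsurj : forall q : Q, exists x : V, pi x = q)
    (Hker : forall x : V, pi x = 0 <-> lie_center br x)
    (Hhom : forall x y : V, pi (br x y) = brQ (pi x) (pi y)) :
  exists th : Q -> Q -> R, symplectic_form brQ th.
Proof.
exists (quotient_dform br w pi).
exact: (quotient_dform_symplectic Hlie Hnil Hdim Hcontact Hsurj Hker Hhom).
Qed.
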